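(* Let $X$ be a distance-regular graph of diameter $d\geq 2$, degree $k$ and $\mu=c_2$. Then every pair of distinct vertices $u,v$ of $X$ is distinguished by at least $k-\mu$ vertices, i.e. there are at least $k-\mu$ vertices $x$ with $\mathrm{dist}(x,u)\neq\mathrm{dist}(x,v)$.
   Context: A connected graph $X$ of diameter $d$ is distance-regular if there are integers $a_i,b_i,c_i$ ($0\le i\le d$) such that for all vertices $v,w$ with $\mathrm{dist}(v,w)=i$, $w$ has exactly $c_i$ neighbours at distance $i-1$, $a_i$ at distance $i$, $b_i$ at distance $i+1$ from $v$; $X$ is $k$-regular with $k=b_0$, and $\mu=c_2$ is the number of common neighbours of two vertices at distance 2. *)

From mathcomp Require Import all_boot.
Set Implicit Arguments. Unset Strict Implicit. Unset Printing Implicit Defensive.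

Definition simple_graph (T : finType) (e : rel T) : Prop :=
  symmetric e /\ irreflexive e.

Fixpoint reach (T : finType) (e : rel T) (n : nat) (x y : T) : bool :=
  match n with
  | 0 => x == y
  | n'.+1 => reach e n' x y || [exists z, reach e n' x z && e z y]
  end.

Definition connected_graph (T : finType) (e : rel T) : Prop :=
  forall x y : T, connect e x y.

(* graph distance: least n with reach e n x y (searched up to #|T|, which
   suffices in a connected graph: every distance is < #|T|). *)
Definition gdist (T : finType) (e : rel T) (x y : T) : nat :=
  find (fun n => reach e n x y) (iota 0 #|T|).

Definition distance_regular (T : finType) (e : rel T) (d : nat)
    (a b c : nat -> nat) : Prop :=
  [/\ simple_graph e, connected_graph e,
      (forall x y, gdist e x y <= d), (exists x y, gdist e x y = d) &
      forall (i : nat) (v w : T), i <= d -> gdist e v w = i ->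
        [/\ #|[set x | e w x & gdist e v x == i.-1]| = (if i is 0 then 0 else c i),
            #|[set x | e w x & gdist e v x == i]| = a i &
            #|[set x | e w x & gdist e v x == i.+1]| = b i]].

From mathcomp Require Import all_boot.
From mathcomp Require Import zify.

Set Implicit Arguments.
Unset Strict Implicit.
Unset Printing Implicit Defensive.

(* Put k = b 0 and mu = c 2. A vertex adjacent to u but not to v is at distance
   1 from u and not from v, so N(u) \ N(v) distinguishes u and v. If u and v are
   not adjacent, |N(u) ∩ N(v)| <= mu, hence |N(u) \ N(v)| >= k - mu. If they are
   adjacent, N(u) \ N(v) and N(v) \ N(u) both distinguish them and have size
   k - a1 each; choosing w ~ v at distance 2 from u (possible as b1 > 0 when
   d >= 2) gives N(u) ∩ N(v) ⊆ (N(u) ∩ N(w)) ∪ (N(v) \ N(w) \ {w}), i.e.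
   a1 <= mu + (k - a1 - 1), so that 2 (k - a1) >= k - mu. *)

Section GraphDistance.
Variables (T : finType) (e : rel T).

Lemma reach_mono m n x y : m <= n -> reach e m x y -> reach e n x y.
Proof.
elim: n => [|n IHn]; first by rewrite leqn0 => /eqP->.
rewrite leq_eqVlt => /orP[/eqP-> //|]; rewrite ltnS => le_mn reach_m.
by rewrite /= (IHn le_mn reach_m).
Qed.

Lemma path_reach x p : path e x p -> reach e (size p) x (last x p).
Proof.
elim/last_ind: p => [|p z IHp] /=; first by rewrite eqxx.
rewrite rcons_path size_rcons last_rcons => /andP[path_p e_z] /=.
by apply/orP; right; apply/existsP; exists (last x p); rewrite IHp.
Qed.

Lemma gdist_le_card x y : gdist e x y <= #|T|.
Proof. by rewrite /gdist; apply: leq_trans (find_size _ _) _; rewrite size_iota. Qed.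

Lemma reach_gdist_le n x y : reach e n x y -> gdist e x y <= n.
Proof.
case: (ltnP n #|T|) => [lt_nT reach_n|le_Tn _]; last exact: leq_trans (gdist_le_card x y) _.
rewrite leqNgt; apply/negP => /(before_find 0).
by rewrite nth_iota // add0n reach_n.
Qed.

Lemma reach_lt_gdist n x y : n < gdist e x y -> ~~ reach e n x y.
Proof.
move=> lt_n; have := before_find 0 lt_n.
by rewrite nth_iota ?add0n => [->|]; last exact: leq_trans lt_n (gdist_le_card x y).
Qed.

Lemma gdist_reach_lt_card x y : gdist e x y < #|T| -> reach e (gdist e x y) x y.
Proof.
move=> lt_T; have has_reach : has (fun n => reach e n x y) (iota 0 #|T|).
  by rewrite has_find size_iota.
by have := nth_find 0 has_reach; rewrite nth_iota ?add0n.
Qed.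

Lemma gdist_eq0 x y : (gdist e x y == 0) = (x == y).
Proof.
apply/idP/idP => [/eqP gdist0|/eqP->]; last by rewrite -leqn0 reach_gdist_le //=.
have : reach e (gdist e x y) x y.
  by apply: gdist_reach_lt_card; rewrite gdist0; apply/card_gt0P; exists x.
by rewrite gdist0.
Qed.

Lemma gdistxx x : gdist e x x = 0.
Proof. by apply/eqP; rewrite gdist_eq0. Qed.

Lemma gdist_eq1 : irreflexive e -> forall x y, (gdist e x y == 1) = e x y.
Proof.
move=> irr x y; have [<-|neq_xy] := eqVneq x y; first by rewrite gdistxx irr.
have two_le_T : 1 < #|T| by apply/card_gt1P; exists x, y.
apply/idP/idP => [/eqP gdist1|e_xy].
  have := gdist_reach_lt_card (x := x) (y := y); rewrite gdist1 => /(_ two_le_T) /=.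
  by rewrite (negPf neq_xy) => /existsP[z /andP[/eqP<-]].
rewrite eqn_leq lt0n gdist_eq0 neq_xy andbT reach_gdist_le //=.
by apply/orP; right; apply/existsP; exists x; rewrite eqxx.
Qed.

Hypothesis conn : connected_graph e.

Lemma gdist_lt_card x y : gdist e x y < #|T|.
Proof.
have /connectP[p path_p ->] := conn x y.
case: (shortenP path_p) => q path_q uniq_q _.
apply: leq_ltn_trans (reach_gdist_le (path_reach path_q)) _.
by have := max_card (mem (x :: q)); rewrite (card_uniqP uniq_q).
Qed.

Lemma gdist_reach x y : reach e (gdist e x y) x y.
Proof. exact/gdist_reach_lt_card/gdist_lt_card. Qed.

Lemma gdist_predS n x y : gdist e x y = n.+1 -> exists2 z, gdist e x z = n & e z y.
Proof.
move=> gdistS; have not_reach_n : ~~ reach e n x y by apply: reach_lt_gdist; rewrite gdistS.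
have := gdist_reach x y; rewrite gdistS /= (negPf not_reach_n).
case/existsP => z /andP[reach_z e_zy]; exists z => //.
apply/eqP; rewrite eqn_leq reach_gdist_le // leqNgt; apply: contra not_reach_n => lt_z.
apply: (@reach_mono (gdist e x z).+1) => //=.
by apply/orP; right; apply/existsP; exists z; rewrite gdist_reach e_zy.
Qed.

Lemma gdist_attained x y m : m <= gdist e x y -> exists z, gdist e x z = m.
Proof.
have := erefl (gdist e x y); move: {2 3}(gdist e x y) => n gdist_n.
elim: n y gdist_n => [|n IHn] y gdist_n; first by rewrite leqn0 => /eqP->; exists y.
rewrite leq_eqVlt => /orP[/eqP->|]; first by exists y.
by have [z gdist_z _] := gdist_predS gdist_n; apply: IHn gdist_z.
Qed.

End GraphDistance.

Section DistanceRegular.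
Variables (T : finType) (e : rel T) (d : nat) (a b c : nat -> nat).
Hypothesis drg : distance_regular e d a b c.

Definition nbhd (x : T) : {set T} := [set y | e x y].

Let e_sym : symmetric e. Proof. by case: drg => -[]. Qed.
Let e_irr : irreflexive e. Proof. by case: drg => -[]. Qed.
Let e_conn : connected_graph e. Proof. by case: drg. Qed.

Lemma nbhdI_gdist x v : nbhd x :&: nbhd v = [set y | e x y & gdist e v y == 1].
Proof. by apply/setP => y; rewrite !inE gdist_eq1. Qed.

Lemma card_nbhd x : #|nbhd x| = b 0.
Proof.
case: drg => _ _ _ _ /(_ 0 x x (leq0n d) (gdistxx e x)) [_ _ <-].
by rewrite -nbhdI_gdist setIid.
Qed.

Lemma card_nbhdI_edge u v : 1 <= d -> e u v -> #|nbhd u :&: nbhd v| = a 1.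
Proof.
move=> le1d e_uv; have gdist_uv : gdist e u v = 1 by apply/eqP; rewrite gdist_eq1.
case: drg => _ _ _ _ /(_ 1 u v le1d gdist_uv) [_ <- _].
by rewrite setIC nbhdI_gdist.
Qed.

Lemma card_nbhdI_dist2 u w : 2 <= d -> gdist e u w = 2 -> #|nbhd u :&: nbhd w| = c 2.
Proof.
move=> le2d gdist_uw; case: drg => _ _ _ _ /(_ 2 u w le2d gdist_uw) [<- _ _].
by rewrite setIC nbhdI_gdist.
Qed.

Lemma card_nbhdI_nonedge u v : 2 <= d -> u != v -> ~~ e u v ->
  #|nbhd u :&: nbhd v| <= c 2.
Proof.
move=> le2d neq_uv ne_uv; have [gdist2|gdist_ne2] := eqVneq (gdist e u v) 2.
  by rewrite card_nbhdI_dist2.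
suff -> : nbhd u :&: nbhd v = set0 by rewrite cards0.
apply/setP => x; rewrite !inE; apply/negbTE/andP => -[e_ux e_vx].
have : gdist e u v <= 2.
  apply: reach_gdist_le => /=; apply/orP; right; apply/existsP; exists x.
  rewrite e_sym e_vx andbT; apply/orP; right; apply/existsP; exists u.
  by rewrite eqxx e_ux.
have : gdist e u v != 0 by rewrite gdist_eq0.
have : gdist e u v != 1 by rewrite gdist_eq1.
by move: gdist_ne2; lia.
Qed.

Lemma b1_gt0 : 2 <= d -> 0 < b 1.
Proof.
move=> le2d; case: drg => _ _ _ [x0 [y0 gdist_d]] DR.
have [z2 gdist_z2] : exists z2, gdist e x0 z2 = 2.
  by apply: (gdist_attained e_conn (y := y0)); rewrite gdist_d.
have [z1 gdist_z1 e_z12] := gdist_predS e_conn gdist_z2.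
have [_ _ <-] := DR 1 x0 z1 (ltnW le2d) gdist_z1.
by apply/card_gt0P; exists z2; rewrite inE e_z12 gdist_z2.
Qed.

Lemma exists_nbhd_dist2 u v : 2 <= d -> e u v ->
  exists2 w, e v w & gdist e u w = 2.
Proof.
move=> le2d e_uv; have gdist_uv : gdist e u v = 1 by apply/eqP; rewrite gdist_eq1.
case: drg => _ _ _ _ /(_ 1 u v (ltnW le2d) gdist_uv) [_ _ card_b1].
have /card_gt0P[w] : 0 < #|[set x | e v x & gdist e u x == 2]|.
  by rewrite card_b1 b1_gt0.
by rewrite inE => /andP[e_vw /eqP]; exists w.
Qed.

Lemma double_a1_lt u v : 2 <= d -> e u v -> a 1 + a 1 < b 0 + c 2.
Proof.
move=> le2d e_uv; have [w e_vw gdist_uw] := exists_nbhd_dist2 le2d e_uv.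
have ne_uw : ~~ e u w by rewrite -(gdist_eq1 e_irr) gdist_uw.
have w_in : w \in nbhd v :\: nbhd w by rewrite !inE e_vw e_irr.
have card_vw : #|nbhd v :\: nbhd w| = b 0 - a 1.
  by rewrite cardsD card_nbhd card_nbhdI_edge ?(ltnW le2d).
have cover_uv : nbhd u :&: nbhd v \subset (nbhd u :&: nbhd w) :|: (nbhd v :\: nbhd w :\ w).
  apply/subsetP => x; rewrite !inE => /andP[e_ux e_vx].
  rewrite e_ux e_vx e_sym /=; case: (e x w); rewrite ?andbT //.
  by apply: contraNneq ne_uw => <-.
have := cardsD1 w (nbhd v :\: nbhd w); rewrite w_in card_vw /=.
have := subset_leq_card cover_uv.
rewrite cardsU card_nbhdI_edge ?(ltnW le2d) // card_nbhdI_dist2 //.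
lia.
Qed.

Lemma nbhdD_distinguishing u v :
  nbhd u :\: nbhd v \subset [set x | gdist e x u != gdist e x v].
Proof.
apply/subsetP => x; rewrite !inE => /andP[ne_vx e_ux].
have /eqP-> : gdist e x u == 1 by rewrite gdist_eq1 // e_sym.
by rewrite eq_sym gdist_eq1 // e_sym.
Qed.

End DistanceRegular.

Theorem lemma4p2 (T : finType) (e : rel T) (d : nat) (a b c : nat -> nat) :
  distance_regular e d a b c -> 2 <= d ->
  forall u v : T, u != v ->
    b 0 - c 2 <= #|[set x | gdist e x u != gdist e x v]|.
Proof.
move=> drg le2d u v neq_uv; set D := [set x | _].
have dist_uv : nbhd e u :\: nbhd e v \subset D := nbhdD_distinguishing drg u v.
have card_uv : #|nbhd e u :\: nbhd e v| = b 0 - #|nbhd e u :&: nbhd e v|.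
  by rewrite cardsD (card_nbhd drg).
have [e_uv|ne_uv] := boolP (e u v); last first.
  rewrite (leq_trans _ (subset_leq_card dist_uv)) // card_uv.
  by rewrite leq_sub2l // (card_nbhdI_nonedge drg).
have dist_vu : nbhd e v :\: nbhd e u \subset D.
  by apply: subset_trans (nbhdD_distinguishing drg v u) _; apply/subsetP => x; rewrite !inE eq_sym.
have card_vu : #|nbhd e v :\: nbhd e u| = b 0 - #|nbhd e u :&: nbhd e v|.
  by rewrite cardsD (card_nbhd drg) setIC.
have card_sym_diff : #|(nbhd e u :\: nbhd e v) :|: (nbhd e v :\: nbhd e u)|
    = #|nbhd e u :\: nbhd e v| + #|nbhd e v :\: nbhd e u|.
  rewrite -cardsUI (_ : _ :&: _ = set0) ?cards0 ?addn0 //.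
  by apply/setP => x; rewrite !inE; case: (e u x); case: (e v x).
have := subset_leq_card (introT subUsetP (conj dist_uv dist_vu)).
rewrite card_sym_diff card_uv card_vu (card_nbhdI_edge drg (ltnW le2d) e_uv).
by have := double_a1_lt drg le2d e_uv; lia.
Qed.
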